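(* Let $A\in\mathbb{R}^{n^2\times n^2}$ be PS-symmetric and define $\tilde A\in\mathbb{R}^{n^2\times n^2}$ by $\tilde A(i_2+(j_2-1)n,\,i_1+(j_1-1)n)=A(i_1+(i_2-1)n,\,j_1+(j_2-1)n)$ for $1\le i_1,i_2,j_1,j_2\le n$. Then $\tilde A$ is PS-symmetric. Consequently there exist real scalars $\lambda^{(\mathrm{sym})}_1,\dots,\lambda^{(\mathrm{sym})}_{n(n+1)/2}$, $\lambda^{(\mathrm{skew})}_1,\dots,\lambda^{(\mathrm{skew})}_{n(n-1)/2}$, symmetric matrices $B^{(\mathrm{sym})}_i\in\mathbb{R}^{n\times n}$ and skew-symmetric matrices $B^{(\mathrm{skew})}_i\in\mathbb{R}^{n\times n}$, whose vecs together form an orthonormal basis of $\mathbb{R}^{n^2}$, such that $$A=\sum_{i=1}^{n(n+1)/2}\lambda^{(\mathrm{sym})}_i\,B^{(\mathrm{sym})}_i\otimes B^{(\mathrm{sym})}_i+\sum_{i=1}^{n(n-1)/2}\lambda^{(\mathrm{skew})}_i\,B^{(\mathrm{skew})}_i\otimes B^{(\mathrm{skew})}_i.$$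
   Context: $\Pi_{nn}=I_{n^2}(:,p)$ with $p=[1{:}n{:}n^2,\;2{:}n{:}n^2,\;\dots,\;n{:}n{:}n^2]$ (MATLAB colon notation), equivalently $\Pi_{nn}(e_i\otimes e_j)=e_j\otimes e_i$ for the standard basis $e_1,\dots,e_n$ of $\mathbb{R}^n$. A matrix $M\in\mathbb{R}^{n^2\times n^2}$ is PS-symmetric if $M=M^T$ and $M=\Pi_{nn}M\Pi_{nn}$. $\otimes$ is the Kronecker product and $\mathrm{vec}$ stacks columns. *)

From HB Require Import structures.
From mathcomp Require Import all_boot all_order all_algebra.
Set Implicit Arguments. Unset Strict Implicit. Unset Printing Implicit Defensive.
Import Order.TTheory GRing.Theory Num.Theory.
Local Open Scope ring_scope.

(* 0-based indexing: vidx i j is the position of entry (i,j) of an n x n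
   matrix in its column-stacking vec, i.e. value i + j*n
   (the paper's 1-based  i + (j-1) n ). *)
Definition vidx (n : nat) (i j : 'I_n) : 'I_(n * n) := mxvec_index j i.

(* inverse of vidx: vsplit (vidx i j) = (i, j) *)
Definition vsplit (n : nat) (a : 'I_(n * n)) : 'I_n * 'I_n :=
  let p := enum_val (cast_ord (esym (mxvec_cast n n)) a) in (p.2, p.1).

Definition vecm (R : Type) (n : nat) (X : 'M[R]_n) : 'cV[R]_(n * n) :=
  \col_a X (vsplit a).1 (vsplit a).2.

(* Kronecker product: (B ⊗ C)(vidx q p, vidx s r) = B p r * C q s *)
Definition kron (R : pzRingType) (n : nat) (B C : 'M[R]_n) : 'M[R]_(n * n) :=
  \matrix_(a, b) (B (vsplit a).2 (vsplit b).2 * C (vsplit a).1 (vsplit b).1).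

(* the perfect shuffle Pi_nn : e_i ⊗ e_j |-> e_j ⊗ e_i, i.e. column
   vidx j i has its single 1 in row vidx i j *)
Definition Pnn (R : pzRingType) (n : nat) : 'M[R]_(n * n) :=
  \matrix_(a, b) ((a == vidx (vsplit b).2 (vsplit b).1)%:R).

Definition PS_symmetric (R : pzRingType) (n : nat) (M : 'M[R]_(n * n)) : Prop :=
  M^T = M /\ M = Pnn R n *m M *m Pnn R n.

Definition Atilde (R : Type) (n : nat) (A : 'M[R]_(n * n)) : 'M[R]_(n * n) :=
  \matrix_(a, b) A (vidx (vsplit b).1 (vsplit a).1) (vidx (vsplit b).2 (vsplit a).2).

From HB Require Import structures.
From mathcomp Require Import all_boot all_order all_algebra.
From mathcomp Require Import complex.
From mathcomp Require Import ring lra zify.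
Set Implicit Arguments. Unset Strict Implicit. Unset Printing Implicit Defensive.
Import Order.TTheory GRing.Theory Num.Theory.
Local Open Scope ring_scope.

(* Reindexing shows that [Atilde A] is PS-symmetric and that [Atilde] is an
   involution on PS-symmetric matrices. The shuffle [Pnn] is a symmetric
   involution of trace n, so its +1 and -1 eigenspaces, the vecs of symmetric
   and of skew-symmetric matrices, have dimensions n(n+1)/2 and n(n-1)/2.
   A PS-symmetric matrix commutes with [Pnn], hence is block diagonal for this
   splitting, and diagonalizing both blocks writes [Atilde A] as
   [sum_i l_i w_i w_i^T] with an orthonormal basis of symmetric and skew vecs
   [w_i]. Since [Atilde (w w^T) = W^T (x) W^T] where [vec W = w], applying
   [Atilde] once more gives the expansion of [A]. *)

Section RealSpectral.
Variable R : rcfType.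

(* The complexification of [M] is hermitian, so its spectral diagonal is real;
   a real eigenvalue of the complexification is one of [M] because the
   determinant commutes with the embedding [R -> R[i]]. *)
Lemma symmx_real_eigenvector k (M : 'M[R]_k.+1) : M^T = M ->
  exists a (v : 'rV[R]_k.+1), v != 0 /\ v *m M = a *: v.
Proof.
move=> Msym.
pose Mc := map_mx (real_complex R) M.
have Mh : Mc \is hermsymmx.
  apply: realsym_hermsym.
    by apply/is_hermitianmxP; rewrite expr0 scale1r map_mx_id // /Mc map_trmx Msym.
  apply/mxOverP => i j; rewrite mxE.
  by rewrite realE (_ : 0 = 0%:C)%C // !lecR le_total.
have /hermitian_normalmx /orthomx_spectralP Me := Mh.
have dreal := hermitian_spectral_diag_real Mh.
set P := spectralmx Mc in Me.
set d := spectral_diag Mc in Me dreal.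
have Pu : P \in unitmx := spectral_unit Mc.
have PM : P *m Mc = diag_mx d *m P by rewrite {1}Me !mulmxA mulmxV // mul1mx.
pose z := row 0 P.
have z0 : z != 0.
  apply/eqP => z0; have := mulmxV Pu; move/(congr1 (row 0)).
  rewrite row_mul -/z z0 mul0mx => /matrixP/(_ 0 0).
  by rewrite !mxE eqxx /= => /eqP; rewrite eq_sym oner_eq0.
have zM : z *m Mc = d 0 0 *: z.
  by rewrite /z -row_mul PM row_mul row_diag_mx -scalemxAl -rowE.
have dr : d 0 0 = (complex.Re (d 0 0))%:C%C.
  have := mxOverP dreal 0 0; rewrite realE !lecE /=.
  by case: (d 0 0) => x y /= /orP[] /andP[] /eqP; [move->|move<-].
set a := complex.Re (d 0 0) in dr.
exists a.
have : \det (M - a%:M) == 0.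
  have : \det (Mc - (a%:C%C)%:M) == 0.
    by apply/det0P; exists z => //; rewrite mulmxBr zM mul_mx_scalar dr subrr.
  rewrite /Mc -map_scalar_mx -map_mxB det_map_mx /= (_ : 0 = 0%:C)%C //.
  by rewrite eq_complex /= eqxx andbT.
move/det0P => [v v0 vM]; exists v; split => //.
by apply/eqP; rewrite -subr_eq0 -mul_mx_scalar -mulmxBr vM.
Qed.

Lemma row_norm2_gt0 k (v : 'rV[R]_k) : v != 0 -> 0 < (v *m v^T) 0 0.
Proof.
move=> v0; have -> : (v *m v^T) 0 0 = \sum_j v 0 j ^+ 2.
  by rewrite !mxE; apply: eq_bigr => j _; rewrite mxE expr2.
have sq_ge0 j : true -> 0 <= v 0 j ^+ 2 by rewrite sqr_ge0.
rewrite lt0r sumr_ge0 ?andbT //; apply: contra v0 => /eqP s0.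
apply/eqP/rowP => j; rewrite [RHS]mxE; apply/eqP; rewrite -sqrf_eq0; apply/eqP.
exact: (psumr_eq0P sq_ge0 s0).
Qed.

(* The Householder reflection [1 - (2 / |w|^2) w^T w] with [w = u - e_0]
   swaps [e_0] and [u]. *)
Lemma unit_row_orthomx k (u : 'rV[R]_k.+1) : u *m u^T = 1%:M ->
  exists H : 'M[R]_k.+1, H *m H^T = 1%:M /\ row 0 H = u.
Proof.
move=> uu.
pose e : 'rV[R]_k.+1 := 'e_0.
pose w := u - e.
pose c := (w *m w^T) 0 0.
have ww : w *m w^T = c%:M by rewrite [LHS]mx11_scalar.
have ce : c = - 2 * (u 0 0 - 1).
  rewrite /c /w linearB /= mulmxBl !mulmxBr uu trmx_delta -colE /e -rowE.
  by rewrite mul_delta_mx !mxE /= mulr1n; ring.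
have [w0|w0] := eqVneq w 0.
  exists 1%:M; split; first by rewrite trmx1 mul1mx.
  by rewrite row1; apply/eqP; rewrite eq_sym -subr_eq0 -/e -/w w0.
have c0 : c != 0 by rewrite gt_eqF ?row_norm2_gt0.
pose K := w^T *m w.
have KK : K *m K = c *: K.
  by rewrite /K mulmxA -(mulmxA _ w) ww mul_mx_scalar -scalemxAl.
pose H := 1%:M - (2 / c) *: K.
have HT : H^T = H by rewrite /H linearB /= trmx1 linearZ /= trmx_mul trmxK.
exists H; split.
  rewrite HT /H mulmxBl mul1mx mulmxBr mulmx1 -scalemxAl -scalemxAr KK !scalerA.
  rewrite (_ : _ * c = 2 / c + 2 / c); last by field.
  by rewrite scalerDl opprB addrK subrK.
rewrite /H linearB linearZ /= row1 /K row_mul [row 0 w^T]mx11_scalar.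
rewrite mul_scalar_mx scalerA (_ : _ * _ = -1); last first.
  by move: c0; rewrite !mxE /= ce mulf_eq0 negb_or => /andP[_ ?]; field.
by rewrite scaleN1r opprK /w -/e addrC subrK.
Qed.

Lemma symmx_unit_eigenvector k (M : 'M[R]_k.+1) : M^T = M ->
  exists a (u : 'rV[R]_k.+1), u *m u^T = 1%:M /\ u *m M = a *: u.
Proof.
move=> /symmx_real_eigenvector [a [v [v0 vM]]].
pose s := (v *m v^T) 0 0.
have s0 : 0 < s by exact: row_norm2_gt0.
exists a, ((Num.sqrt s)^-1 *: v); split; last first.
  by rewrite -scalemxAl vM !scalerA mulrC.
rewrite linearZ /= -scalemxAl -scalemxAr scalerA [v *m v^T]mx11_scalar -/s.
rewrite scale_scalar_mx; congr (_%:M).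
have q0 : Num.sqrt s != 0 by rewrite sqrtr_eq0 -ltNge.
by rewrite -[X in _ * X](sqr_sqrtr (ltW s0)); field.
Qed.

Lemma symmx_orthodiag k (M : 'M[R]_k) : M^T = M ->
  exists (P : 'M[R]_k) (d : 'rV[R]_k),
    P *m P^T = 1%:M /\ P *m M *m P^T = diag_mx d.
Proof.
elim: k M => [|k IH] M Ms.
  exists 1%:M, 0; split; first by rewrite trmx1 mul1mx.
  by rewrite [LHS]flatmx0 [RHS]flatmx0.
have [a [u [uu uM]]] := symmx_unit_eigenvector Ms.
(* Row 0 of [H] is [u], so the symmetric [N = H M H^T] has first row [a e_0]:
   it is block diagonal and the induction hypothesis handles its lower block. *)
have [H [HH Hu]] := unit_row_orthomx uu.
pose N : 'M[R]_(1 + k) := H *m M *m H^T.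
have NT : N^T = N by rewrite /N !trmx_mul trmxK Ms mulmxA.
have Nrow : row 0 N = a *: row 0 1%:M.
  by rewrite /N !row_mul Hu uM -scalemxAl -Hu -row_mul HH.
have NE : H *m M *m H^T = N by [].
clearbody N.
have Nur : ursubmx N = 0.
  apply/matrixP => i j; move/matrixP: Nrow => /(_ 0 (rshift 1 j)).
  by rewrite !mxE (ord1 i) /= mulr0 => <-; congr (N _ _); apply: val_inj.
have Ndl : dlsubmx N = 0 by rewrite -NT -trmx_ursub Nur trmx0.
have N'T : (drsubmx N)^T = drsubmx N by rewrite trmx_drsub NT.
have [P' [d' [PP' PNP']]] := IH _ N'T.
pose B : 'M[R]_(1 + k) := block_mx 1%:M 0 0 P'.
have BB : B *m B^T = 1%:M.
  rewrite /B tr_block_mx mulmx_block !trmx0 trmx1 !mul0mx !mulmx0 !mul1mx.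
  by rewrite !addr0 add0r PP' -scalar_mx_block.
exists (B *m H), (row_mx (ulsubmx N) d'); split.
  by rewrite trmx_mul mulmxA -(mulmxA B) HH mulmx1 BB.
have -> : B *m H *m M *m (B *m H)^T = B *m N *m B^T.
  by rewrite -NE trmx_mul !mulmxA.
rewrite -{1}(submxK N) Nur Ndl /B tr_block_mx !mulmx_block !trmx0 trmx1.
rewrite !(mulmx0, mul0mx, mulmx1, mul1mx, addr0, add0r) PNP' (diag_mx_row (ulsubmx N) d').
suff -> : diag_mx (ulsubmx N) = ulsubmx N by [].
by apply/matrixP => i j; rewrite (ord1 i) (ord1 j) !mxE eqxx mulr1n.
Qed.

Lemma symmx_spectral k (M : 'M[R]_k) : M^T = M ->
  exists (P : 'M[R]_k) (d : 'rV[R]_k),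
    [/\ P *m P^T = 1%:M, P^T *m P = 1%:M & M = P^T *m diag_mx d *m P].
Proof.
move/symmx_orthodiag => [P [d [PP PMP]]]; have PtP := mulmx1C PP.
by exists P, d; split; rewrite // -PMP !mulmxA PtP mul1mx -mulmxA PtP mulmx1.
Qed.

End RealSpectral.

Section Shuffle.
Variable n : nat.

Lemma vidxK (i j : 'I_n) : vsplit (vidx i j) = (i, j).
Proof. by rewrite /vsplit /vidx /mxvec_index cast_ordK enum_rankK. Qed.

Lemma vsplitK (a : 'I_(n * n)) : vidx (vsplit a).1 (vsplit a).2 = a.
Proof.
by rewrite /vsplit /vidx /mxvec_index /= -surjective_pairing enum_valK cast_ordKV.
Qed.

Definition vswap (a : 'I_(n * n)) := vidx (vsplit a).2 (vsplit a).1.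

Lemma vswapK : involutive vswap.
Proof. by move=> a; rewrite /vswap vidxK /= vsplitK. Qed.

Lemma vswap_vidx (i j : 'I_n) : vswap (vidx i j) = vidx j i.
Proof. by rewrite /vswap vidxK. Qed.

Variable R : pzRingType.

Lemma PnnE a b : Pnn R n a b = (a == vswap b)%:R.
Proof. by rewrite mxE. Qed.

Lemma mulPnnmx m (M : 'M[R]_(n * n, m)) a b : (Pnn R n *m M) a b = M (vswap a) b.
Proof.
rewrite mxE (bigD1 (vswap a)) //= PnnE vswapK eqxx mul1r big1 ?addr0 // => c ca.
by rewrite PnnE -(inj_eq (can_inj vswapK)) vswapK eq_sym (negbTE ca) mul0r.
Qed.

Lemma mulmxPnn m (M : 'M[R]_(m, n * n)) a b : (M *m Pnn R n) a b = M a (vswap b).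
Proof.
rewrite mxE (bigD1 (vswap b)) //= PnnE eqxx mulr1 big1 ?addr0 // => c cb.
by rewrite PnnE (negbTE cb) mulr0.
Qed.

Lemma trmx_Pnn : (Pnn R n)^T = Pnn R n.
Proof.
apply/matrixP => a b; rewrite mxE !PnnE; congr (_%:R).
by rewrite eq_sym (can2_eq vswapK vswapK).
Qed.

Lemma mulPnnPnn : Pnn R n *m Pnn R n = 1%:M.
Proof.
apply/matrixP => a b; rewrite mulPnnmx PnnE [RHS]mxE.
by rewrite (inj_eq (can_inj vswapK)).
Qed.

Lemma trace_Pnn : \tr (Pnn R n) = n%:R.
Proof.
rewrite /mxtrace (reindex (fun p : 'I_n * 'I_n => vidx p.1 p.2)) /=; last first.
  by exists (@vsplit n) => [p _|a _]; rewrite ?vidxK -?surjective_pairing ?vsplitK.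
rewrite -(pair_big predT predT (fun i j => Pnn R n (vidx i j) (vidx i j))) /=.
rewrite -[n in RHS]card_ord -sumr_const; apply: eq_bigr => i _.
rewrite (bigD1 i) //= PnnE vswap_vidx eqxx big1 ?addr0 // => j ji.
rewrite PnnE vswap_vidx; case: eqP => // /(congr1 (@vsplit n)).
by rewrite !vidxK => -[ij _]; rewrite ij eqxx in ji.
Qed.

Lemma PS_symmetricP (M : 'M[R]_(n * n)) :
  PS_symmetric M <-> M^T = M /\ forall a b, M a b = M (vswap a) (vswap b).
Proof.
split=> -[MT MP]; split=> //.
  by move=> a b; rewrite {1}MP mulmxPnn mulPnnmx.
by apply/matrixP => a b; rewrite mulmxPnn mulPnnmx MP.
Qed.

Lemma Atilde_PS (A : 'M[R]_(n * n)) : PS_symmetric A -> PS_symmetric (Atilde A).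
Proof.
move=> /PS_symmetricP [AT AP]; apply/PS_symmetricP; split.
  by apply/matrixP => a b; rewrite !mxE AP !vswap_vidx.
by move=> a b; rewrite !mxE /vswap !vidxK /= -{1}AT mxE.
Qed.

Lemma AtildeK (A : 'M[R]_(n * n)) : PS_symmetric A -> Atilde (Atilde A) = A.
Proof.
move=> /PS_symmetricP [AT AP]; apply/matrixP => a b.
by rewrite !mxE !vidxK /= -[b]vswapK -[a]vswapK -AP vswapK vswapK -{2}AT mxE.
Qed.

Lemma AtildeD (M N : 'M[R]_(n * n)) : Atilde (M + N) = Atilde M + Atilde N.
Proof. by apply/matrixP => a b; rewrite !mxE. Qed.

End Shuffle.

Lemma sign_split_dims n s t : s = (t + n)%N -> (s + t = n * n)%N ->
  s = (n * n.+1 %/ 2)%N /\ t = (n * n.-1 %/ 2)%N.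
Proof.
move=> st stn; split.
  by rewrite (_ : n * n.+1 = s * 2)%N ?mulnK // mulnS; lia.
by rewrite (_ : n * n.-1 = t * 2)%N ?mulnK // -subn1 mulnBr muln1; lia.
Qed.

Section SymSkewBasis.
Variables (R : rcfType) (n : nat).

(* A row fixed (resp. negated) by [Pnn] is the vec of a symmetric (resp.
   skew-symmetric) matrix, see [trmx_unvecm] below. *)
Definition sym_skew_basis s t (Us : 'M[R]_(s, n * n)) (Uk : 'M[R]_(t, n * n)) :=
  [/\ Us *m Us^T = 1%:M, Uk *m Uk^T = 1%:M, Us *m Uk^T = 0,
      Us^T *m Us + Uk^T *m Uk = 1%:M & Us *m Pnn R n = Us /\ Uk *m Pnn R n = - Uk].

Lemma sum_sign_row m (d : 'rV[R]_m) : (forall i, d 0 i = 1 \/ d 0 i = -1) ->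
  \sum_i d 0 i = #|[set i | d 0 i == 1]|%:R - #|~: [set i | d 0 i == 1]|%:R.
Proof.
move=> d_sign; rewrite (bigID (fun i => i \in [set i | d 0 i == 1])) /=.
rewrite -!sumr_const -sumrN; congr (_ + _); apply: eq_big => i.
- by [].
- by rewrite inE => /eqP.
- by rewrite in_setC.
- by rewrite inE; have [|] := d_sign i => ->; rewrite ?eqxx // => _; rewrite opprK.
Qed.

Lemma Pnn_eigenbasis : exists (P : 'M[R]_(n * n)) (d : 'rV[R]_(n * n)),
  [/\ P *m P^T = 1%:M, P *m Pnn R n = diag_mx d *m P,
      forall i, d 0 i = 1 \/ d 0 i = -1 & \sum_i d 0 i = n%:R].
Proof.
have [P [d [PP /esym D_PPnn]]] := symmx_orthodiag (trmx_Pnn n R).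
have PtP := mulmx1C PP.
exists P, d; split => //.
- by rewrite D_PPnn -!mulmxA PtP mulmx1.
- move=> i; have : diag_mx d *m diag_mx d = 1%:M.
    rewrite D_PPnn !mulmxA -(mulmxA _ P^T P) PtP mulmx1.
    by rewrite -(mulmxA P) mulPnnPnn mulmx1 PP.
  move/matrixP/(_ i i); rewrite mulmx_diag !mxE eqxx mulr1n -expr2 => /eqP.
  by rewrite sqrf_eq1 => /orP[] /eqP; [left|right].
- by rewrite -mxtrace_diag -trace_Pnn D_PPnn mxtrace_mulC mulmxA PtP mul1mx.
Qed.

Lemma orthomx_rowsub m k1 k2 (P : 'M[R]_m) (f : 'I_k1 -> 'I_m) (g : 'I_k2 -> 'I_m) :
  P *m P^T = 1%:M -> rowsub f P *m (rowsub g P)^T = \matrix_(i, j) (f i == g j)%:R.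
Proof.
by move=> PP; rewrite trmx_mxsub -mxsub_mul PP; apply/matrixP => i j; rewrite !mxE.
Qed.

Lemma orthomx_col_complete s t m (Us : 'M[R]_(s, m)) (Uk : 'M[R]_(t, m)) :
  (s + t = m)%N -> Us *m Us^T = 1%:M -> Uk *m Uk^T = 1%:M -> Us *m Uk^T = 0 ->
  Us^T *m Us + Uk^T *m Uk = 1%:M.
Proof.
move=> stm UsUs UkUk UsUk.
have QQ : col_mx Us Uk *m (col_mx Us Uk)^T = 1%:M.
  have UkUs : Uk *m Us^T = 0 by rewrite -[Uk]trmxK -trmx_mul UsUk trmx0.
  by rewrite tr_col_mx mul_col_row UsUs UkUk UsUk UkUs -scalar_mx_block.
rewrite -mul_row_col -tr_col_mx; move: (col_mx Us Uk) QQ; rewrite stm.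
by move=> Q /mulmx1C.
Qed.

Lemma Pnn_sym_skew_basis : exists (Us : 'M[R]_(n * n.+1 %/ 2, n * n))
  (Uk : 'M[R]_(n * n.-1 %/ 2, n * n)), sym_skew_basis Us Uk.
Proof.
have [P [d [PP PPnn d_sign trd]]] := Pnn_eigenbasis.
pose S := [set i | d 0 i == 1].
have [cardS cardSC] : #|S| = (n * n.+1 %/ 2)%N /\ #|~: S| = (n * n.-1 %/ 2)%N.
  apply: sign_split_dims; last by rewrite cardsC card_ord.
  by apply/eqP; rewrite -(eqr_nat R) natrD -trd sum_sign_row // addrCA subrr addr0.
pose f k := enum_val (cast_ord (esym cardS) k : 'I_#|S|).
pose g k := enum_val (cast_ord (esym cardSC) k : 'I_#|~: S|).
have fS k : d 0 (f k) = 1.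
  by apply/eqP; have := enum_valP (cast_ord (esym cardS) k); rewrite inE.
have gS k : d 0 (g k) = -1.
  have := enum_valP (cast_ord (esym cardSC) k); rewrite !inE.
  by have [|] := d_sign (g k) => ->; rewrite ?eqxx.
have f_inj : injective f by move=> k l /enum_val_inj /cast_ord_inj.
have g_inj : injective g by move=> k l /enum_val_inj /cast_ord_inj.
have UsUs : rowsub f P *m (rowsub f P)^T = 1%:M.
  by rewrite orthomx_rowsub //; apply/matrixP => k l; rewrite !mxE (inj_eq f_inj).
have UkUk : rowsub g P *m (rowsub g P)^T = 1%:M.
  by rewrite orthomx_rowsub //; apply/matrixP => k l; rewrite !mxE (inj_eq g_inj).
have UsUk : rowsub f P *m (rowsub g P)^T = 0.
  rewrite orthomx_rowsub //; apply/matrixP => k l; rewrite !mxE.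
  by case: eqP => // fg; have := fS k; rewrite fg gS; lra.
exists (rowsub f P), (rowsub g P); split => //.
  by apply: orthomx_col_complete; rewrite // -cardS -cardSC cardsC card_ord.
by split; rewrite mul_rowsub_mx PPnn; apply/matrixP => k b;
  rewrite mul_diag_mx !mxE ?fS ?gS ?mul1r ?mulN1r.
Qed.
Lemma mx_eqNr m p (X : 'M[R]_(m, p)) : (- X == X) = (X == 0).
Proof.
apply/eqP/eqP => [XN|->]; last by rewrite oppr0.
apply/matrixP => i j; move/matrixP: XN => /(_ i j); rewrite !mxE => /eqP.
by rewrite eqNr => /eqP.
Qed.

(* A PS-symmetric [T] commutes with [Pnn], so it maps the symmetric and the
   skew-symmetric subspaces to themselves; diagonalize each block. *)
Lemma PS_symmetric_orthodiag s t (Us : 'M[R]_(s, n * n))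
    (Uk : 'M[R]_(t, n * n)) (T : 'M[R]_(n * n)) :
  sym_skew_basis Us Uk -> PS_symmetric T ->
  exists (Ws : 'M[R]_(s, n * n)) (Wk : 'M[R]_(t, n * n)) (ds : 'rV[R]_s) (dk : 'rV[R]_t),
    sym_skew_basis Ws Wk /\ T = Ws^T *m diag_mx ds *m Ws + Wk^T *m diag_mx dk *m Wk.
Proof.
case=> UsUs UkUk UsUk Ucomp [UsP UkP] [TT TP].
have PUk : Pnn R n *m Uk^T = - Uk^T by rewrite -trmx_Pnn -trmx_mul UkP linearN.
have cross : Us *m T *m Uk^T = 0.
  apply/eqP; rewrite -mx_eqNr {1}TP !mulmxA UsP -(mulmxA (Us *m T)) PUk mulmxN.
  by rewrite opprK.
have cross' : Uk *m T *m Us^T = 0.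
  by have := congr1 trmx cross; rewrite !trmx_mul trmxK TT mulmxA trmx0.
have TE : T = Us^T *m (Us *m T *m Us^T) *m Us + Uk^T *m (Uk *m T *m Uk^T) *m Uk.
  pose Q := col_mx Us Uk.
  have QtQ : Q^T *m Q = 1%:M by rewrite /Q tr_col_mx mul_row_col.
  have TQ : T = Q^T *m (Q *m T *m Q^T) *m Q.
    by rewrite !mulmxA QtQ mul1mx -mulmxA QtQ mulmx1.
  rewrite {1}TQ /Q mul_col_mx tr_col_mx mul_col_row cross cross' mul_row_block.
  by rewrite !mulmx0 !addr0 !add0r mul_row_col.
have blockT m (U : 'M[R]_(m, n * n)) : (U *m T *m U^T)^T = U *m T *m U^T.
  by rewrite !trmx_mul trmxK TT mulmxA.
have [Ps [ds [PPs PtPs MsE]]] := symmx_spectral (blockT _ Us).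
have [Pk [dk [PPk PtPk MkE]]] := symmx_spectral (blockT _ Uk).
exists (Ps *m Us), (Pk *m Uk), ds, dk; split; last first.
  by rewrite TE MsE MkE !trmx_mul !mulmxA.
split.
- by rewrite trmx_mul mulmxA -(mulmxA Ps) UsUs mulmx1 PPs.
- by rewrite trmx_mul mulmxA -(mulmxA Pk) UkUk mulmx1 PPk.
- by rewrite trmx_mul mulmxA -(mulmxA Ps) UsUk mulmx0 mul0mx.
- by rewrite !trmx_mul !mulmxA -(mulmxA Us^T) -(mulmxA Uk^T) PtPs PtPk !mulmx1.
- by split; rewrite -mulmxA ?UsP ?UkP ?mulmxN.
Qed.

End SymSkewBasis.

Definition unvecm (R : Type) n (v : 'rV[R]_(n * n)) : 'M[R]_n :=
  \matrix_(p, q) v 0 (vidx p q).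

Section Unvec.
Variables (R : comPzRingType) (n : nat).
Implicit Types (v : 'rV[R]_(n * n)) (B C : 'M[R]_n).

Lemma vecm_unvecm v : vecm (unvecm v) = v^T.
Proof. by apply/matrixP => a j; rewrite !mxE vsplitK (ord1 j). Qed.

Lemma trmx_unvecm v : (unvecm v)^T = unvecm (v *m Pnn R n).
Proof. by apply/matrixP => p q; rewrite [RHS]mxE mulmxPnn !mxE vswap_vidx. Qed.

Lemma unvecmN v : unvecm (- v) = - unvecm v.
Proof. by apply/matrixP => p q; rewrite !mxE. Qed.

Lemma vecm_unvecm_dot m1 m2 (W : 'M[R]_(m1, n * n)) (V : 'M[R]_(m2, n * n)) i j :
  (vecm (unvecm (row i W)))^T *m vecm (unvecm (row j V)) = ((W *m V^T) i j)%:M.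
Proof.
rewrite !vecm_unvecm trmxK; apply/matrixP => x y.
by rewrite (ord1 x) (ord1 y) !mxE eqxx mulr1n; apply: eq_bigr => k _; rewrite !mxE.
Qed.

Lemma sum_vecm_unvecm m (W : 'M[R]_(m, n * n)) (x : 'cV[R]_m) :
  \sum_i x i 0 *: vecm (unvecm (row i W)) = W^T *m x.
Proof.
rewrite -[RHS]trmxK trmx_mul trmxK mulmx_sum_row linear_sum /=.
by apply: eq_bigr => i _; rewrite linearZ /= vecm_unvecm mxE.
Qed.

Lemma kronNN B C : kron (- B) (- C) = kron B C.
Proof. by apply/matrixP => a b; rewrite !mxE mulrNN. Qed.

Lemma Atilde_quad m (W : 'M[R]_(m, n * n)) (d : 'rV[R]_m) :
  Atilde (W^T *m diag_mx d *m W) =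
  \sum_i d 0 i *: kron (unvecm (row i W))^T (unvecm (row i W))^T.
Proof.
apply/matrixP => a b; rewrite mul_mx_diag !mxE summxE; apply: eq_bigr => i _.
by rewrite !mxE mulrAC mulrC (mulrC (W i _)).
Qed.

End Unvec.

Theorem mainTheorem10 (R : rcfType) (n : nat) (A : 'M[R]_(n * n)) :
  PS_symmetric A ->
  PS_symmetric (Atilde A) /\
  exists (ls : 'I_(n * n.+1 %/ 2) -> R) (Bs : 'I_(n * n.+1 %/ 2) -> 'M[R]_n)
         (lk : 'I_(n * n.-1 %/ 2) -> R) (Bk : 'I_(n * n.-1 %/ 2) -> 'M[R]_n),
    (forall i, (Bs i)^T = Bs i) /\
        (forall i, (Bk i)^T = - Bk i) /\
        (forall i j, (vecm (Bs i))^T *m vecm (Bs j) = (i == j)%:R%:M) /\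
        (forall i j, (vecm (Bk i))^T *m vecm (Bk j) = (i == j)%:R%:M) /\
        (forall i j, (vecm (Bs i))^T *m vecm (Bk j) = 0) /\
        (forall v : 'cV[R]_(n * n), exists (c : 'I_(n * n.+1 %/ 2) -> R)
                                           (d : 'I_(n * n.-1 %/ 2) -> R),
            v = \sum_i c i *: vecm (Bs i) + \sum_i d i *: vecm (Bk i)) /\
        A = \sum_i ls i *: kron (Bs i) (Bs i) + \sum_i lk i *: kron (Bk i) (Bk i).
Proof.
move=> PSA; have PST := Atilde_PS PSA; split => //.
have [Us [Uk basisU]] := Pnn_sym_skew_basis R n.
have [Ws [Wk [ds [dk [[WsWs WkWk WsWk Wcomp [WsP WkP]] TE]]]]] :=
  PS_symmetric_orthodiag basisU PST.
pose Bs i := unvecm (row i Ws); pose Bk i := unvecm (row i Wk).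
have BsT i : (Bs i)^T = Bs i by rewrite trmx_unvecm -row_mul WsP.
have BkT i : (Bk i)^T = - Bk i by rewrite trmx_unvecm -row_mul WkP linearN /= unvecmN.
exists (fun i => ds 0 i), Bs, (fun i => dk 0 i), Bk; do 2!split => //.
split; first by move=> i j; rewrite vecm_unvecm_dot WsWs mxE.
split; first by move=> i j; rewrite vecm_unvecm_dot WkWk mxE.
split; first by move=> i j; rewrite vecm_unvecm_dot WsWk mxE raddf0.
split.
  move=> v; exists (fun i => (Ws *m v) i 0), (fun i => (Wk *m v) i 0).
  by rewrite !sum_vecm_unvecm !mulmxA -mulmxDl Wcomp mul1mx.
rewrite -(AtildeK PSA) TE AtildeD !Atilde_quad.
by congr (_ + _); apply: eq_bigr => i _; rewrite ?BsT ?BkT ?kronNN.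
Qed.
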